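(* Let $\Im$ be a finite simplicial graph with vertex set $X$ in which every closed path has even length, and let $G$ (resp. $M$) be the right-angled Artin group (resp. monoid) presented by generators $X$ and relations $ab=ba$ for each edge $a-b$ of $\Im$. Colour the vertices of $\Im$ black and white so that adjacent vertices have different colours; let $B$, $W$ be the sets of black and white vertices. Choose a total order on $X\cup X^{-1}$ in which every element of $B\cup B^{-1}$ is greater than every element of $W\cup W^{-1}$, and let $\Re$ be the rewriting system on $X\cup X^{-1}$ consisting of the free reduction rules $xx^{-1}\rightarrow1$, $x^{-1}x\rightarrow1$ ($x\in X$) together with the rules $a^{\gamma}b^{\epsilon}\rightarrow b^{\epsilon}a^{\gamma}$ for every edge $a-b$ of $\Im$ with $a\in B$, $b\in W$, and all $\gamma,\epsilon\in\{1,-1\}$ (these rules are oriented according to the length-lexicographical order induced by the chosen total order). Then $\Re$ is a finite complete rewriting system for $G$, it satisfies the condition $C^{+}$, and $\Re^{+}=\{ab\rightarrow ba : a-b\text{ an edge},\ a\in B,\ b\in W\}$ is a rewriting system for $M$ (i.e. $M\cong X^{*}/\equiv_{\Re^{+}}$).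
   Context: A rewriting system on an alphabet $\Sigma$ is a set of rules $l\rightarrow r$ in $\Sigma^{*}\times\Sigma^{*}$; $ulv$ reduces to $urv$. Complete means terminating (no infinite reduction chains) and confluent (words with a common ancestor under $\rightarrow^{*}$ have a common descendant). A rewriting system for $G$ is one on $X\cup X^{-1}$ whose generated congruence equals that generated by the defining relations of $G$ together with $xx^{-1}=1$, $x^{-1}x=1$ ($x\in X$). A word is positive if it lies in $X^{*}$ (empty word included). $\Re^{+}$ is the set of rules of $\Re$ with positive left-hand side. $\Re$ satisfies $C^{+}$ if $\Re^{+}\neq\emptyset$ and every rule with positive left-hand side has positive right-hand side. $\equiv_{\Re^{+}}$ is the congruence on $X^{*}$ generated by $\Re^{+}$. *)

From mathcomp Require Import all_boot.
From Stdlib Require Import Relations.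
Set Implicit Arguments. Unset Strict Implicit. Unset Printing Implicit Defensive.

Section Rewriting.
Variable A : eqType.

Definition rsystem := seq (seq A * seq A).

Definition step (R : rsystem) (w w' : seq A) : Prop :=
  exists (l r u v : seq A), (l, r) \in R /\ w = u ++ l ++ v /\ w' = u ++ r ++ v.

Definition reduces (R : rsystem) := clos_refl_trans (seq A) (step R).

Definition terminating (R : rsystem) : Prop :=
  well_founded (fun w' w => step R w w').

Definition confluent (R : rsystem) : Prop :=
  forall w u v, reduces R w u -> reduces R w v ->
    exists z, reduces R u z /\ reduces R v z.

Definition complete (R : rsystem) : Prop := terminating R /\ confluent R.

(* the congruence generated by R (the equivalence closure of one-step
   reduction, which is automatically compatible with concatenation) *)
Definition congr_gen (R : rsystem) := clos_refl_sym_trans (seq A) (step R).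

Definition same_congruence (R S : rsystem) : Prop :=
  forall u v, congr_gen R u v <-> congr_gen S u v.
End Rewriting.

(* A letter (x, false) stands for x, (x, true) for x^{-1}. *)
Definition letter (X : finType) := (X * bool)%type.

Definition positive_word (X : finType) (w : seq (letter X)) : bool :=
  all (fun c : letter X => ~~ c.2) w.

Definition free_rules (X : finType) : rsystem (letter X) :=
  [seq ([:: (x, false); (x, true)], [::]) | x <- enum X] ++
  [seq ([:: (x, true); (x, false)], [::]) | x <- enum X].

Definition raag_relations (X : finType) (adj : rel X) : rsystem (letter X) :=
  free_rules X ++
  [seq ([:: (p.1, false); (p.2, false)], [:: (p.2, false); (p.1, false)])
     | p <- enum [pred p : X * X | adj p.1 p.2]].

Definition raam_relations (X : finType) (adj : rel X) : rsystem X :=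
  [seq ([:: p.1; p.2], [:: p.2; p.1]) | p <- enum [pred p : X * X | adj p.1 p.2]].

(* The system Re: free reductions and a^g b^e -> b^e a^g for every edge
   a - b with a black (col a = true) and b white, g, e in {1,-1}. *)
Definition Re (X : finType) (adj : rel X) (col : X -> bool) : rsystem (letter X) :=
  free_rules X ++
  [seq ([:: (q.1.1.1, q.1.2); (q.1.1.2, q.2)], [:: (q.1.1.2, q.2); (q.1.1.1, q.1.2)])
     | q <- enum [pred q : X * X * bool * bool |
                   [&& adj q.1.1.1 q.1.1.2, col q.1.1.1 & ~~ col q.1.1.2]]].

Definition rplus (X : finType) (R : rsystem (letter X)) : rsystem (letter X) :=
  [seq lr <- R | positive_word lr.1].

Definition cond_Cplus (X : finType) (R : rsystem (letter X)) : Prop :=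
  rplus R != [::] /\
  forall l r, (l, r) \in R -> positive_word l -> positive_word r.

(* a positive rule system viewed as a rewriting system on X^* *)
Definition to_positive (X : finType) (R : rsystem (letter X)) : rsystem X :=
  [seq ([seq c.1 | c <- lr.1], [seq c.1 | c <- lr.2]) | lr <- R].

(* Termination: a rule either shortens the word by two (free reduction) or moves
   a white letter in front of a black one, so  length + #(black-before-white
   pairs)  strictly decreases.
   Confluence: every left-hand side has length two and determines its rule, so
   by the critical pair lemma for such systems it suffices to join the overlaps
   pqs of two rules pq and qs; together with Newman's lemma this gives
   completeness.
   Presentations: two systems generate the same congruence as soon as each rule
   of one is a consequence of the other.  Every edge has exactly one black end,
   so each commutation ab = ba of the group (resp. monoid) is a rule of Re
   (resp. Re^+) or its reverse; conversely the commutations with inverted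
   letters follow from ab = ba and the free reductions.

   Only the proper colouring is used: the absence of
   odd cycles is what makes such a colouring exist, and the chosen order on
   letters merely fixes the orientation of the rules, which is built into Re. *)
From Stdlib Require Import Relations Wf_nat Lia.
From mathcomp Require Import all_boot zify.
Set Implicit Arguments. Unset Strict Implicit. Unset Printing Implicit Defensive.

Section StringRewriting.
Variables (A : eqType) (R : rsystem A).

Lemma step_ctx x y a b : step R a b -> step R (x ++ a ++ y) (x ++ b ++ y).
Proof.
move=> [l [r [u [v [lrR [-> ->]]]]]].
by exists l, r, (x ++ u), (v ++ y); rewrite !catA.
Qed.

Lemma reduces_ctx x y a b : reduces R a b -> reduces R (x ++ a ++ y) (x ++ b ++ y).
Proof.
elim=> [a' b' ab|a'|a' b' c' _ ab _ bc].
- exact/rt_step/step_ctx.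
- exact: rt_refl.
- exact: rt_trans ab bc.
Qed.

Lemma congr_ctx x y a b : congr_gen R a b -> congr_gen R (x ++ a ++ y) (x ++ b ++ y).
Proof.
elim=> [a' b' ab|a'|a' b' _ ab|a' b' c' _ ab _ bc].
- exact/rst_step/step_ctx.
- exact: rst_refl.
- exact: rst_sym.
- exact: rst_trans ab bc.
Qed.

Lemma reduces_rule x y l r : (l, r) \in R -> reduces R (x ++ l ++ y) (x ++ r ++ y).
Proof. by move=> lrR; apply: rt_step; exists l, r, x, y. Qed.

Lemma congr_rule l r : (l, r) \in R -> congr_gen R l r.
Proof. by move=> lrR; apply: rst_step; exists l, r, [::], [::]; rewrite !cats0. Qed.

Lemma congr_comm_inverse x x' y :
  congr_gen R [:: x; y] [:: y; x] ->
  ([:: x; x'], [::]) \in R -> ([:: x'; x], [::]) \in R ->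
  congr_gen R [:: x'; y] [:: y; x'].
Proof.
move=> xy xx' x'x.
apply: (rst_trans _ _ _ [:: x'; y; x; x']).
  exact: (congr_ctx [:: x'; y] [::] (rst_sym _ _ _ _ (congr_rule xx'))).
apply: (rst_trans _ _ _ [:: x'; x; y; x']).
  exact: (congr_ctx [:: x'] [:: x'] (rst_sym _ _ _ _ xy)).
exact: (congr_ctx [::] [:: y; x'] (congr_rule x'x)).
Qed.

Definition joinable (u v : seq A) := exists z, reduces R u z /\ reduces R v z.

Definition locally_confluent :=
  forall w u v, step R w u -> step R w v -> joinable u v.

Lemma newman : terminating R -> locally_confluent -> confluent R.
Proof.
move=> wfR lconf w; elim/(well_founded_ind wfR): w => w IH u v wu wv.
apply clos_rt_rt1n in wu; apply clos_rt_rt1n in wv.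
case: wu IH wv => [|u1 u' wu1 u1u] IH wv.
  by exists v; split; [exact: clos_rt1n_rt | exact: rt_refl].
case: wv => [|v1 v' wv1 v1v].
  exists u'; split; first exact: rt_refl.
  exact: rt_trans (rt_step _ _ _ _ wu1) (clos_rt1n_rt _ _ _ _ u1u).
have [z0 [u1z0 v1z0]] := lconf _ _ _ wu1 wv1.
have [z1 [u'z1 z0z1]] := IH _ wu1 _ _ (clos_rt1n_rt _ _ _ _ u1u) u1z0.
have [z2 [v'z2 z1z2]] :=
  IH _ wv1 _ _ (clos_rt1n_rt _ _ _ _ v1v) (rt_trans _ _ _ _ _ v1z0 z0z1).
by exists z2; split=> //; exact: rt_trans u'z1 z1z2.
Qed.

Lemma cat_eq_prefix (u1 u2 s t : seq A) :
  size u1 <= size u2 -> u1 ++ s = u2 ++ t -> exists m, u2 = u1 ++ m /\ s = m ++ t.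
Proof.
elim: u1 u2 => [|a u1 IH] [|b u2] //=.
- by move=> _ ->; exists [::].
- by move=> _ ->; exists (b :: u2).
- by rewrite ltnS => le_u [-> /(IH _ le_u) [m [-> ->]]]; exists m.
Qed.

Section LengthTwoRules.
Hypothesis lhs_pair : forall l r, (l, r) \in R -> exists p q, l = [:: p; q].
Hypothesis deterministic : forall l r1 r2, (l, r1) \in R -> (l, r2) \in R -> r1 = r2.
Hypothesis overlaps_joinable : forall p q s r1 r2,
  ([:: p; q], r1) \in R -> ([:: q; s], r2) \in R -> joinable (r1 ++ [:: s]) (p :: r2).

(* The two redexes are equal, overlap in one letter, or are disjoint. *)
Lemma joinable_redexes u1 v1 l1 r1 u2 v2 l2 r2 :
  size u1 <= size u2 -> (l1, r1) \in R -> (l2, r2) \in R ->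
  u1 ++ l1 ++ v1 = u2 ++ l2 ++ v2 ->
  joinable (u1 ++ r1 ++ v1) (u2 ++ r2 ++ v2).
Proof.
move=> le_u rule1 rule2 /(cat_eq_prefix le_u) [m [-> eq_m]].
have [p1 [q1 l1E]] := lhs_pair rule1; have [p2 [q2 l2E]] := lhs_pair rule2.
subst l1 l2; case: m eq_m => [|x [|y m']] /= [? ? ?]; subst.
- by rewrite cats0 (deterministic rule1 rule2); exists (u1 ++ r2 ++ v2); split; exact: rt_refl.
- have [z [r1z r2z]] := overlaps_joinable rule1 rule2.
  exists (u1 ++ z ++ v2); split.
    by rewrite -[r1 ++ _ :: v2]/(r1 ++ [:: q2] ++ v2) (catA r1); apply: reduces_ctx.
  by rewrite -catA -[[:: x] ++ _]/((x :: r2) ++ v2); apply: reduces_ctx.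
- exists (u1 ++ r1 ++ m' ++ r2 ++ v2); split.
    by have := reduces_rule (u1 ++ r1 ++ m') v2 rule2; rewrite -!catA.
  by have := reduces_rule u1 (m' ++ r2 ++ v2) rule1; rewrite -!catA.
Qed.

Lemma length_two_locally_confluent : locally_confluent.
Proof.
move=> w u v [l1 [r1 [u1 [v1 [rule1 [w1 ->]]]]]] [l2 [r2 [u2 [v2 [rule2 [w2 ->]]]]]].
case: (leqP (size u1) (size u2)) => [le_u|/ltnW le_u].
  by apply: joinable_redexes le_u rule1 rule2 _; rewrite -w1 -w2.
have [z [z2 z1]] := joinable_redexes le_u rule2 rule1 (etrans (esym w2) w1).
by exists z.
Qed.
End LengthTwoRules.
End StringRewriting.

Lemma congr_gen_sub (A : eqType) (R S : rsystem A) :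
  (forall l r, (l, r) \in R -> congr_gen S l r) ->
  forall u v, congr_gen R u v -> congr_gen S u v.
Proof.
move=> RS u v; elim=> [a b [l [r [x [y [lrR [-> ->]]]]]]|a|a b _ ab|a b c _ ab _ bc].
- exact: congr_ctx (RS _ _ lrR).
- exact: rst_refl.
- exact: rst_sym.
- exact: rst_trans ab bc.
Qed.

Lemma same_congruence_rules (A : eqType) (R S : rsystem A) :
  (forall l r, (l, r) \in R -> congr_gen S l r) ->
  (forall l r, (l, r) \in S -> congr_gen R l r) ->
  same_congruence R S.
Proof. by move=> RS SR u v; split; apply: congr_gen_sub. Qed.

Lemma free_rules_mem (X : finType) l r :
  (l, r) \in free_rules X <-> exists x b, l = [:: (x, b); (x, ~~ b)] /\ r = [::].
Proof.
rewrite /free_rules mem_cat; split.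
- by case/orP=> /mapP [x _ [-> ->]]; [exists x, false | exists x, true].
- move=> [x [[] [-> ->]]]; apply/orP; [right|left]; apply/mapP; exists x => //;
    exact: mem_enum.
Qed.

Lemma raag_relations_mem (X : finType) (adj : rel X) l r :
  (l, r) \in raag_relations adj <->
  (exists x b, l = [:: (x, b); (x, ~~ b)] /\ r = [::]) \/
  (exists a c, [/\ adj a c, l = [:: (a, false); (c, false)] & r = [:: (c, false); (a, false)]]).
Proof.
rewrite /raag_relations mem_cat; split.
- case/orP=> [/free_rules_mem free|/mapP [[a c] edge [-> ->]]]; [by left | right].
  by rewrite mem_enum in edge; exists a, c.
- case=> [/free_rules_mem free|[a [c [edge -> ->]]]]; apply/orP; [by left | right].
  by apply/mapP; exists (a, c); rewrite ?mem_enum.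
Qed.

Lemma raam_relations_mem (X : finType) (adj : rel X) l r :
  (l, r) \in raam_relations adj <-> exists a c, [/\ adj a c, l = [:: a; c] & r = [:: c; a]].
Proof.
split=> [/mapP [[a c] edge [-> ->]]|[a [c [edge -> ->]]]].
  by rewrite mem_enum in edge; exists a, c.
by apply/mapP; exists (a, c); rewrite ?mem_enum.
Qed.

Lemma to_positive_mem (X : finType) (S : rsystem (letter X)) l r :
  (l, r) \in to_positive S <->
  exists l0 r0, [/\ (l0, r0) \in S, l = [seq c.1 | c <- l0] & r = [seq c.1 | c <- r0]].
Proof.
split=> [/mapP [[l0 r0] lrS [-> ->]]|[l0 [r0 [lrS -> ->]]]]; first by exists l0, r0.
by apply/mapP; exists (l0, r0).
Qed.

Section BipartiteSystem.
Variables (X : finType) (adj : rel X) (col : X -> bool).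
Local Notation Re := (Re adj col).

Definition black_white (a c : X) := [&& adj a c, col a & ~~ col c].

Lemma Re_mem l r :
  (l, r) \in Re <->
  (exists x b, l = [:: (x, b); (x, ~~ b)] /\ r = [::]) \/
  (exists a c g e, black_white a c /\ l = [:: (a, g); (c, e)] /\ r = [:: (c, e); (a, g)]).
Proof.
rewrite /Re mem_cat; split.
- case/orP=> [/free_rules_mem free|/mapP [[[[a c] g] e] bw [-> ->]]]; [by left | right].
  by rewrite mem_enum in bw; exists a, c, g, e.
- case=> [/free_rules_mem free|[a [c [g [e [bw [-> ->]]]]]]]; apply/orP; [by left | right].
  by apply/mapP; exists (a, c, g, e); rewrite ?mem_enum.
Qed.

Lemma free_rule_in x b : ([:: (x, b); (x, ~~ b)], [::]) \in Re.
Proof. by apply/Re_mem; left; exists x, b. Qed.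

Lemma swap_rule_in a c g e :
  black_white a c -> ([:: (a, g); (c, e)], [:: (c, e); (a, g)]) \in Re.
Proof. by move=> bw; apply/Re_mem; right; exists a, c, g, e. Qed.

Definition nblack (s : seq (letter X)) := count (fun c : letter X => col c.1) s.
Definition nwhite (s : seq (letter X)) := count (fun c : letter X => ~~ col c.1) s.

Fixpoint inversions (s : seq (letter X)) : nat :=
  if s is c :: s' then (if col c.1 then nwhite s' else 0) + inversions s' else 0.

Lemma inversions_cat u v :
  inversions (u ++ v) = inversions u + inversions v + nblack u * nwhite v.
Proof.
elim: u => [|c u IH] /=; first by rewrite mul0n addn0.
by rewrite IH /nwhite /nblack /= count_cat; case: (col c.1) => /=; lia.
Qed.

Lemma Re_terminating : terminating Re.
Proof.
apply: (well_founded_lt_compat _ (fun w => size w + inversions w)).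
move=> w' w [l [r [u [v [lrR [-> ->]]]]]]; apply/ltP.
rewrite !size_cat !inversions_cat /nblack /nwhite !count_cat.
case/Re_mem: lrR => [[x [b [-> ->]]]|[a [c [g [e [/and3P [_ black white] [-> ->]]]]]]] /=.
  by case: (col x) => /=; lia.
by rewrite black (negbTE white) /=; lia.
Qed.

(* The left-hand side of a rule determines it: a letter followed by its
   inverse is never a black-white pair. *)
Lemma Re_deterministic l r1 r2 : (l, r1) \in Re -> (l, r2) \in Re -> r1 = r2.
Proof.
case/Re_mem=> [[x [b [-> ->]]]|[a [c [g [e [bw [-> ->]]]]]]];
case/Re_mem=> [[x' [b' [lE ->]]]|[a' [c' [g' [e' [bw' [lE ->]]]]]]] //;
  case: lE => *; subst => //.
- by case/and3P: bw' => _ ->.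
- by case/and3P: bw => _ ->.
Qed.

Lemma Re_lhs_pair l r : (l, r) \in Re -> exists p q, l = [:: p; q].
Proof.
by case/Re_mem=> [[x [b [-> _]]]|[a [c [g [e [_ [-> _]]]]]]]; do 2 eexists.
Qed.

(* The critical pairs: two overlapping free reductions give the same word;
   a free reduction overlapping a swap is joined by a swap and a free
   reduction; two swaps cannot overlap, the middle letter being both white
   and black. *)
Lemma Re_overlaps_joinable p q s r1 r2 :
  ([:: p; q], r1) \in Re -> ([:: q; s], r2) \in Re -> joinable Re (r1 ++ [:: s]) (p :: r2).
Proof.
case/Re_mem=> [[x [b [[-> ->] ->]]]|[a [c [g [e [bw [[-> ->] ->]]]]]]];
case/Re_mem=> [[x' [b' [lE ->]]]|[a' [c' [g' [e' [bw' [lE ->]]]]]]];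
  case: lE => *; subst.
- by rewrite negbK; exists [:: (x', b)]; split; exact: rt_refl.
- exists [:: (c', e')]; split; first exact: rt_refl.
  apply: (rt_trans _ _ _ [:: (c', e'); (a', b); (a', ~~ b)]).
    exact: (reduces_rule [::] [:: (a', ~~ b)] (swap_rule_in b e' bw')).
  exact: (reduces_rule [:: (c', e')] [::] (free_rule_in a' b)).
- exists [:: (a, g)]; split; last exact: rt_refl.
  apply: (rt_trans _ _ _ [:: (x', b'); (x', ~~ b'); (a, g)]).
    exact: (reduces_rule [:: (x', b')] [::] (swap_rule_in g (~~ b') bw)).
  exact: (reduces_rule [::] [:: (a, g)] (free_rule_in x' b')).
- by case/and3P: bw => _ _ /negP; case/and3P: bw'.
Qed.

Lemma Re_complete : complete Re.
Proof.
split; first exact: Re_terminating.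
apply: newman; first exact: Re_terminating.
apply: length_two_locally_confluent.
- exact: Re_lhs_pair.
- exact: Re_deterministic.
- exact: Re_overlaps_joinable.
Qed.

Lemma rplus_Re_mem l r : (l, r) \in rplus Re <->
  exists a b, [/\ adj a b, col a, ~~ col b,
                 l = [:: (a, false); (b, false)] & r = [:: (b, false); (a, false)]].
Proof.
rewrite /rplus mem_filter; split.
- case/andP=> pos /Re_mem [[x [b [lE _]]]|[a [c [g [e [bw [lE ->]]]]]]];
    rewrite {}lE in pos *; first by case: b pos.
  case/and3P: bw => edge black white; move: pos => /= /and3P [/negbTE-> /negbTE-> _].
  by exists a, c.
- move=> [a [b [edge black white -> ->]]] /=.
  by apply: swap_rule_in; apply/and3P.
Qed.

Lemma Re_positive_rules l r : (l, r) \in Re -> positive_word l -> positive_word r.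
Proof.
case/Re_mem=> [[x [b [_ ->]]]|[a [c [g [e [_ [-> ->]]]]]]] //= /and3P [pos_a pos_c _].
by rewrite pos_a pos_c.
Qed.

Section ProperColouring.
Hypothesis adj_sym : symmetric adj.
Hypothesis col_proper : forall a b, adj a b -> col a != col b.

Lemma edge_black_white a c : adj a c -> black_white a c \/ black_white c a.
Proof.
move=> edge; have := col_proper edge; rewrite /black_white edge (adj_sym c a) edge.
by case: (col a); case: (col c); auto.
Qed.

Lemma raag_free_rule x b : ([:: (x, b); (x, ~~ b)], [::]) \in raag_relations adj.
Proof. by apply/raag_relations_mem; left; exists x, b. Qed.

Lemma raag_comm a c g e :
  adj a c -> congr_gen (raag_relations adj) [:: (a, g); (c, e)] [:: (c, e); (a, g)].
Proof.
have comm_pos a0 c0 g0 : adj a0 c0 ->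
    congr_gen (raag_relations adj) [:: (a0, g0); (c0, false)] [:: (c0, false); (a0, g0)].
  move=> edge; have ac0 : congr_gen (raag_relations adj)
      [:: (a0, false); (c0, false)] [:: (c0, false); (a0, false)].
    by apply: congr_rule; apply/raag_relations_mem; right; exists a0, c0.
  case: g0 => //; apply: (congr_comm_inverse ac0 (raag_free_rule a0 false)).
  exact: (raag_free_rule a0 true).
move=> edge; case: e; last exact: comm_pos.
apply: rst_sym; apply: (congr_comm_inverse (rst_sym _ _ _ _ (comm_pos _ _ g edge))).
  exact: (raag_free_rule c false).
exact: (raag_free_rule c true).
Qed.

Lemma edge_commutes_in (T : eqType) (S : rsystem T) (f : X -> T) a c :
  (forall a0 c0, black_white a0 c0 -> ([:: f a0; f c0], [:: f c0; f a0]) \in S) ->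
  adj a c -> congr_gen S [:: f a; f c] [:: f c; f a].
Proof.
move=> swaps /edge_black_white [bw|bw]; first exact/congr_rule/swaps.
exact/rst_sym/congr_rule/swaps.
Qed.

Lemma Re_presents_raag : same_congruence Re (raag_relations adj).
Proof.
apply: same_congruence_rules => l r.
- case/Re_mem=> [[x [b [-> ->]]]|[a [c [g [e [/and3P [edge _ _] [-> ->]]]]]]].
    exact/congr_rule/raag_free_rule.
  exact: raag_comm.
- case/raag_relations_mem=> [[x [b [-> ->]]]|[a [c [edge -> ->]]]].
    exact/congr_rule/free_rule_in.
  apply: (@edge_commutes_in _ _ (fun x => (x, false)) a c _ edge) => a0 c0.
  exact: swap_rule_in.
Qed.

Lemma Re_Cplus : (exists a b, adj a b) -> cond_Cplus Re.
Proof.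
move=> [a [c edge]]; split; last exact: Re_positive_rules.
have [a0 [c0 /and3P [edge0 black white]]] : exists a0 c0, black_white a0 c0.
  by case: (edge_black_white edge) => bw; do 2 eexists; exact: bw.
have swap_pos : ([:: (a0, false); (c0, false)], [:: (c0, false); (a0, false)]) \in rplus Re.
  by apply/rplus_Re_mem; exists a0, c0.
by apply/eqP=> empty; rewrite empty in swap_pos.
Qed.

Lemma rplus_presents_raam :
  same_congruence (to_positive (rplus Re)) (raam_relations adj).
Proof.
apply: same_congruence_rules => l r.
- case/to_positive_mem=> [l0 [r0 [/rplus_Re_mem [a [c [edge _ _ -> ->]]] -> ->]]].
  by apply: congr_rule; apply/raam_relations_mem; exists a, c.
- case/raam_relations_mem=> [a [c [edge -> ->]]].
  apply: (@edge_commutes_in _ _ id a c _ edge) => a0 c0 bw; apply/to_positive_mem.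
  exists [:: (a0, false); (c0, false)], [:: (c0, false); (a0, false)]; split=> //.
  by case/and3P: bw => edge0 black white; apply/rplus_Re_mem; exists a0, c0.
Qed.
End ProperColouring.
End BipartiteSystem.

Theorem propositionB4
  (X : finType) (adj : rel X)
  (adj_sym : symmetric adj) (adj_irr : irreflexive adj)
  (* the graph has at least one edge (needed for R^+ <> empty in C^+) *)
  (has_edge : exists a b, adj a b)
  (* every closed path in the graph has even length *)
  (even_cycles : forall (x : X) (p : seq X),
      path adj x p -> last x p = x -> ~~ odd (size p))
  (* colouring: col x = true means x is black (x \in B), false white *)
  (col : X -> bool)
  (col_proper : forall a b, adj a b -> col a != col b)
  (* a total order on X u X^-1, given by an injective rank, in which
     every element of B u B^-1 is above every element of W u W^-1 *)
  (rk : letter X -> nat) (rk_inj : injective rk)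
  (rk_BW : forall (a b : X) (g e : bool), col a -> ~~ col b -> rk (b, e) < rk (a, g)) :
  complete (Re adj col) /\
  same_congruence (Re adj col) (raag_relations adj) /\
  cond_Cplus (Re adj col) /\
  (forall l r, (l, r) \in rplus (Re adj col) <->
     exists a b, [/\ adj a b, col a, ~~ col b,
                    l = [:: (a, false); (b, false)] & r = [:: (b, false); (a, false)]]) /\
  same_congruence (to_positive (rplus (Re adj col))) (raam_relations adj).
Proof.
split; first exact: Re_complete.
split; first exact: Re_presents_raag.
split; first exact: Re_Cplus.
split; first exact: rplus_Re_mem.
exact: rplus_presents_raam.
Qed.
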